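(* Let $\mathcal{E}$ be a right exact category satisfying axiom R3. Suppose given a commutative diagram with rows $A\xrightarrow{\alpha}B\xrightarrow{\beta}C$, $X\to Y\to Z$, $A\xrightarrow{\alpha}B\xrightarrow{\beta}C$ and vertical morphisms $A\to X\to A$, $B\to Y\to B$, $C\to Z\to C$ whose composites are the identities of $A$, $B$, $C$ respectively. If $X\to Y\to Z$ is a conflation, then $A\xrightarrow{\alpha}B\xrightarrow{\beta}C$ is a conflation.
   Context: A conflation category is an additive category with a class of kernel-cokernel pairs (conflations; kernel part = inflation, cokernel part = deflation) closed under isomorphism. It is right exact if $1_0$ is a deflation, deflations compose, and pullbacks of deflations along arbitrary morphisms exist and are deflations. Axiom R3: if $i\colon A\to B$ and $p\colon B\to C$ are morphisms such that $p$ has a kernel and $p\circ i$ is a deflation, then $p$ is a deflation. *)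

From HB Require Import structures.
From mathcomp Require Import all_boot all_algebra.
Set Implicit Arguments. Unset Strict Implicit. Unset Printing Implicit Defensive.
Import GRing.Theory.
Local Open Scope ring_scope.

Record PreaddCat := {
  Obj :> Type;
  Mor : Obj -> Obj -> zmodType;
  idm : forall A, Mor A A;
  comp : forall A B C, Mor B C -> Mor A B -> Mor A C;
  comp_assoc : forall A B C D (h : Mor C D) (g : Mor B C) (f : Mor A B),
      comp h (comp g f) = comp (comp h g) f;
  comp_idl : forall A B (f : Mor A B), comp (idm B) f = f;
  comp_idr : forall A B (f : Mor A B), comp f (idm A) = f;
  comp_addl : forall A B C (g g' : Mor B C) (f : Mor A B),
      comp (g + g') f = comp g f + comp g' f;
  comp_addr : forall A B C (g : Mor B C) (f f' : Mor A B),
      comp g (f + f') = comp g f + comp g f'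
}.

Arguments Mor {p}.
Arguments idm {p}.
Arguments comp {p A B C}.
Notation "g \oc f" := (comp g f) (at level 40, left associativity).

Section Notions.
Variable E : PreaddCat.

Definition is_zero_obj (Z : E) : Prop :=
  forall A : E, (forall f g : Mor A Z, f = g) /\ (forall f g : Mor Z A, f = g).

Definition is_biproduct (A B P : E) (i1 : Mor A P) (i2 : Mor B P)
  (p1 : Mor P A) (p2 : Mor P B) : Prop :=
  p1 \oc i1 = idm A /\ p2 \oc i2 = idm B /\
  p2 \oc i1 = 0 /\ p1 \oc i2 = 0 /\
  (i1 \oc p1) + (i2 \oc p2) = idm P.

Definition is_additive : Prop :=
  (exists Z : E, is_zero_obj Z) /\
  (forall A B : E, exists (P : E) (i1 : Mor A P) (i2 : Mor B P)
      (p1 : Mor P A) (p2 : Mor P B), is_biproduct i1 i2 p1 p2).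

Definition is_iso (A B : E) (f : Mor A B) : Prop :=
  exists g : Mor B A, g \oc f = idm A /\ f \oc g = idm B.

Definition is_kernel (K B C : E) (i : Mor K B) (p : Mor B C) : Prop :=
  p \oc i = 0 /\
  forall (T : E) (f : Mor T B), p \oc f = 0 -> exists! g : Mor T K, i \oc g = f.

Definition is_cokernel (A B C : E) (p : Mor B C) (i : Mor A B) : Prop :=
  p \oc i = 0 /\
  forall (T : E) (f : Mor B T), f \oc i = 0 -> exists! g : Mor C T, g \oc p = f.

Definition has_kernel (B C : E) (p : Mor B C) : Prop :=
  exists (K : E) (i : Mor K B), is_kernel i p.

Definition is_kernel_cokernel_pair (A B C : E) (i : Mor A B) (p : Mor B C) : Prop :=
  is_kernel i p /\ is_cokernel p i.

(** Square  P --f'--> B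
            |p'       |p
            C' --f--> C   is a pullback. *)
Definition is_pullback (P B C C' : E) (p' : Mor P C') (f' : Mor P B)
  (p : Mor B C) (f : Mor C' C) : Prop :=
  p \oc f' = f \oc p' /\
  forall (T : E) (u : Mor T C') (v : Mor T B), f \oc u = p \oc v ->
    exists! w : Mor T P, p' \oc w = u /\ f' \oc w = v.
End Notions.

Record ConflCat := {
  cat :> PreaddCat;
  cat_additive : is_additive cat;
  Confl : forall A B C : cat, Mor A B -> Mor B C -> Prop;
  confl_kc : forall (A B C : cat) (i : Mor A B) (p : Mor B C),
      Confl i p -> is_kernel_cokernel_pair i p;
  confl_iso : forall (A B C A' B' C' : cat) (i : Mor A B) (p : Mor B C)
      (i' : Mor A' B') (p' : Mor B' C') (a : Mor A A') (b : Mor B B') (c : Mor C C'),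
      is_iso a -> is_iso b -> is_iso c ->
      b \oc i = i' \oc a -> c \oc p = p' \oc b ->
      Confl i p -> Confl i' p'
}.

Arguments Confl {c0 A B C}.

Section Exact.
Variable E : ConflCat.

Definition is_deflation (B C : E) (p : Mor B C) : Prop :=
  exists (A : E) (i : Mor A B), Confl i p.

Definition is_inflation (A B : E) (i : Mor A B) : Prop :=
  exists (C : E) (p : Mor B C), Confl i p.

Definition right_exact : Prop :=
  (forall Z : E, is_zero_obj Z -> is_deflation (idm Z)) /\
  (forall (A B C : E) (f : Mor A B) (g : Mor B C),
      is_deflation f -> is_deflation g -> is_deflation (g \oc f)) /\
  (forall (B C C' : E) (p : Mor B C) (f : Mor C' C), is_deflation p ->
      exists (P : E) (p' : Mor P C') (f' : Mor P B),
        is_pullback p' f' p f /\ is_deflation p').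

Definition axiom_R3 : Prop :=
  forall (A B C : E) (i : Mor A B) (p : Mor B C),
    has_kernel p -> is_deflation (p \oc i) -> is_deflation p.
End Exact.

(* A retract of a kernel is a kernel, so alpha is a kernel of beta. Pulling
   the deflation d back along c1 gives a deflation q : Q -> C with
   q = beta \oc (b2 \oc f'), so beta is a deflation by R3. The kernel of beta
   in its conflation is isomorphic to alpha, and conflations are closed under
   isomorphism. *)
From mathcomp Require Import all_boot all_algebra.
Set Implicit Arguments. Unset Strict Implicit. Unset Printing Implicit Defensive.
Local Open Scope ring_scope.

Section Preadditive.
Variable E : PreaddCat.

Lemma comp0l (A B C : E) (f : Mor A B) : (0 : Mor B C) \oc f = 0.
Proof.
apply: (@GRing.addrI _ ((0 : Mor B C) \oc f)).
by rewrite -comp_addl !GRing.addr0.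
Qed.

Lemma comp0r (A B C : E) (g : Mor B C) : g \oc (0 : Mor A B) = 0.
Proof.
apply: (@GRing.addrI _ (g \oc (0 : Mor A B))).
by rewrite -comp_addr !GRing.addr0.
Qed.

Lemma is_iso_id (A : E) : is_iso (idm A).
Proof. by exists (idm A); rewrite comp_idl. Qed.

Lemma kernel_mono (K B C T : E) (i : Mor K B) (p : Mor B C) (g h : Mor T K) :
  is_kernel i p -> i \oc g = i \oc h -> g = h.
Proof.
move=> [ip0 kerP] igh.
have /kerP [w [_ w_uniq]] : p \oc (i \oc g) = 0 by rewrite comp_assoc ip0 comp0l.
by rewrite -(w_uniq g erefl) (w_uniq h (esym igh)).
Qed.

Lemma kernel_iso (K K' B C : E) (k : Mor K B) (k' : Mor K' B) (p : Mor B C) :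
  is_kernel k p -> is_kernel k' p -> exists u : Mor K' K, is_iso u /\ k \oc u = k'.
Proof.
move=> kerk kerk'.
have [u [ku _]] := kerk.2 _ k' kerk'.1.
have [v [k'v _]] := kerk'.2 _ k kerk.1.
exists u; split=> //; exists v; split.
- by apply: (kernel_mono kerk'); rewrite comp_assoc k'v ku comp_idr.
- by apply: (kernel_mono kerk); rewrite comp_assoc ku k'v comp_idr.
Qed.

Lemma retract_kernel (A B C X Y Z : E) (alpha : Mor A B) (beta : Mor B C)
    (i : Mor X Y) (d : Mor Y Z) (a1 : Mor A X) (a2 : Mor X A)
    (b1 : Mor B Y) (b2 : Mor Y B) (c1 : Mor C Z) (c2 : Mor Z C) :
  i \oc a1 = b1 \oc alpha -> d \oc b1 = c1 \oc beta ->
  alpha \oc a2 = b2 \oc i -> beta \oc b2 = c2 \oc d ->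
  a2 \oc a1 = idm A -> b2 \oc b1 = idm B ->
  is_kernel i d -> is_kernel alpha beta.
Proof.
move=> sq1 sq2 sq3 sq4 ha hb kerid; have [di0 kerP] := kerid.
split.
  rewrite -[alpha]comp_idl -hb -(comp_assoc b2 b1 alpha) -sq1.
  rewrite (comp_assoc beta b2) sq4 -(comp_assoc c2 d) (comp_assoc d i a1) di0.
  by rewrite comp0l comp0r.
move=> T f betaf0.
have /kerP [g [ig _]] : d \oc (b1 \oc f) = 0.
  by rewrite comp_assoc sq2 -comp_assoc betaf0 comp0r.
exists (a2 \oc g); split.
  by rewrite comp_assoc sq3 -comp_assoc ig comp_assoc hb comp_idl.
move=> h alphah.
have <- : a1 \oc h = g.
  by apply: (kernel_mono kerid); rewrite ig comp_assoc sq1 -comp_assoc alphah.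
by rewrite comp_assoc ha comp_idl.
Qed.

End Preadditive.

Section RightExact.
Variables (E : ConflCat) (hRE : right_exact E) (hR3 : axiom_R3 E).

Lemma retract_deflation (B C Y Z : E) (beta : Mor B C) (d : Mor Y Z)
    (b2 : Mor Y B) (c1 : Mor C Z) (c2 : Mor Z C) :
  beta \oc b2 = c2 \oc d -> c2 \oc c1 = idm C ->
  is_deflation d -> has_kernel beta -> is_deflation beta.
Proof.
move=> sq4 hc defl_d ker_beta.
have [Q [q [f' [[dq _] defl_q]]]] := hRE.2.2 _ _ _ d c1 defl_d.
apply: (hR3 (i := b2 \oc f')) => //.
by rewrite comp_assoc sq4 -comp_assoc dq comp_assoc hc comp_idl.
Qed.

Lemma deflation_kernel_Confl (A B C : E) (alpha : Mor A B) (beta : Mor B C) :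
  is_deflation beta -> is_kernel alpha beta -> Confl alpha beta.
Proof.
move=> [K [k Ckbeta]] ker_alpha.
have [u [iso_u alpha_u]] := kernel_iso ker_alpha (confl_kc Ckbeta).1.
apply: (confl_iso iso_u (is_iso_id B) (is_iso_id C) _ _ Ckbeta).
- by rewrite comp_idl alpha_u.
- by rewrite comp_idl comp_idr.
Qed.

End RightExact.

Theorem proposition2p6 (E : ConflCat) (hRE : right_exact E) (hR3 : axiom_R3 E)
  (A B C X Y Z : E)
  (alpha : Mor A B) (beta : Mor B C) (i : Mor X Y) (d : Mor Y Z)
  (a1 : Mor A X) (a2 : Mor X A) (b1 : Mor B Y) (b2 : Mor Y B)
  (c1 : Mor C Z) (c2 : Mor Z C)
  (sq1 : i \oc a1 = b1 \oc alpha) (sq2 : d \oc b1 = c1 \oc beta)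
  (sq3 : alpha \oc a2 = b2 \oc i) (sq4 : beta \oc b2 = c2 \oc d)
  (ha : a2 \oc a1 = idm A) (hb : b2 \oc b1 = idm B) (hc : c2 \oc c1 = idm C) :
  Confl i d -> Confl alpha beta.
Proof.
move=> Cid.
have ker_alpha : is_kernel alpha beta.
  exact: retract_kernel sq1 sq2 sq3 sq4 ha hb (confl_kc Cid).1.
apply: (deflation_kernel_Confl _ ker_alpha).
apply: (retract_deflation hRE hR3 sq4 hc).
- by exists X, i.
- by exists A, alpha.
Qed.
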